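(* Let $\mathcal{A}$ be a Banach algebra. Then the following are equivalent: (i) $\mathcal{A}$ is approximately amenable; (ii) $\mathcal{H}^n_{app}(\mathcal{A},X^* )=\{0\}$ for every Banach $\mathcal{A}$-bimodule $X$ and every $n\ge1$.
   Context: For a Banach $\mathcal{A}$-bimodule $X$, $X^*$ is a Banach $\mathcal{A}$-bimodule via $\langle x,a\cdot\varphi\rangle=\langle x\cdot a,\varphi\rangle$, $\langle x,\varphi\cdot a\rangle=\langle a\cdot x,\varphi\rangle$. For a Banach $\mathcal{A}$-bimodule $Z$, $\mathcal{BL}^n(\mathcal{A},Z)$ ($n\ge1$) is the space of bounded $n$-linear maps $\mathcal{A}^n\to Z$, $\mathcal{BL}^0(\mathcal{A},Z)=Z$, with Hochschild coboundary $(\delta^nT)(a_1,\dots,a_{n+1})=a_1\cdot T(a_2,\dots,a_{n+1})+\sum_{k=1}^n(-1)^kT(a_1,\dots,a_ka_{k+1},\dots,a_{n+1})+(-1)^{n+1}T(a_1,\dots,a_n)\cdot a_{n+1}$ and $\delta^0(z)(a)=a\cdot z-z\cdot a$. $\mathcal{Z}^n(\mathcal{A},Z)=\ker\delta^n$, $\mathcal{B}^n(\mathcal{A},Z)=\operatorname{ran}\delta^{n-1}$. Strong topology: $T_i\to T$ iff $\|(T_i-T)(a_1,\dots,a_n)\|\to0$ for all $a_j\in\mathcal{A}$. $\mathcal{H}^n_{app}(\mathcal{A},Z)=\mathcal{Z}^n(\mathcal{A},Z)/\overline{\mathcal{B}^n(\mathcal{A},Z)}^{\mathrm{strong}}$ for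 $n\ge1$. $\mathcal{A}$ is approximately amenable if for every Banach $\mathcal{A}$-bimodule $X$ and every continuous derivation $D:\mathcal{A}\to X^*$ (i.e. $D\in\mathcal{Z}^1(\mathcal{A},X^* )$) there is a net $(f_\nu)\subseteq X^*$ with $D(a)=\lim_\nu(a\cdot f_\nu-f_\nu\cdot a)$ in norm for every $a\in\mathcal{A}$. *)

From Stdlib Require Import Reals List Arith.
Import ListNotations.
Open Scope R_scope.

Record C := mkC { Re : R; Im : R }.
Definition C0 : C := mkC 0 0.
Definition C1 : C := mkC 1 0.
Definition Cadd (z w : C) : C := mkC (Re z + Re w) (Im z + Im w).
Definition Copp (z : C) : C := mkC (- Re z) (- Im z).
Definition Cmul (z w : C) : C :=
  mkC (Re z * Re w - Im z * Im w) (Re z * Im w + Im z * Re w).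
Definition Cnorm (z : C) : R := sqrt (Re z * Re z + Im z * Im z).

Record BanachSpace := {
  bs_car :> Type;
  vzero : bs_car;
  vadd : bs_car -> bs_car -> bs_car;
  vopp : bs_car -> bs_car;
  vscal : C -> bs_car -> bs_car;
  vnorm : bs_car -> R;
  vadd_assoc : forall x y z, vadd x (vadd y z) = vadd (vadd x y) z;
  vadd_comm : forall x y, vadd x y = vadd y x;
  vadd_0 : forall x, vadd vzero x = x;
  vadd_opp : forall x, vadd x (vopp x) = vzero;
  vscal_addl : forall c d x, vscal (Cadd c d) x = vadd (vscal c x) (vscal d x);
  vscal_addr : forall c x y, vscal c (vadd x y) = vadd (vscal c x) (vscal c y);
  vscal_mul : forall c d x, vscal (Cmul c d) x = vscal c (vscal d x);
  vscal_1 : forall x, vscal C1 x = x;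
  vnorm_eq0 : forall x, vnorm x = 0 -> x = vzero;
  vnorm_0 : vnorm vzero = 0;
  vnorm_triangle : forall x y, vnorm (vadd x y) <= vnorm x + vnorm y;
  vnorm_scal : forall c x, vnorm (vscal c x) = Cnorm c * vnorm x;
  vcomplete : forall u : nat -> bs_car,
    (forall eps, 0 < eps -> exists N, forall m n, (N <= m)%nat -> (N <= n)%nat ->
        vnorm (vadd (u m) (vopp (u n))) < eps) ->
    exists l, forall eps, 0 < eps -> exists N, forall n, (N <= n)%nat ->
        vnorm (vadd (u n) (vopp l)) < eps
}.
Arguments vzero {_}. Arguments vadd {_}. Arguments vopp {_}.
Arguments vscal {_}. Arguments vnorm {_}.

Record BanachAlgebra := {
  ba_sp :> BanachSpace;
  amul : ba_sp -> ba_sp -> ba_sp;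
  amul_assoc : forall a b c, amul a (amul b c) = amul (amul a b) c;
  amul_addl : forall a b c, amul (vadd a b) c = vadd (amul a c) (amul b c);
  amul_addr : forall a b c, amul a (vadd b c) = vadd (amul a b) (amul a c);
  amul_scall : forall z a b, amul (vscal z a) b = vscal z (amul a b);
  amul_scalr : forall z a b, amul a (vscal z b) = vscal z (amul a b);
  amul_norm : forall a b, vnorm (amul a b) <= vnorm a * vnorm b
}.
Arguments amul {_}.

Record BanachBimodule (A : BanachAlgebra) := {
  bm_sp :> BanachSpace;
  lact : A -> bm_sp -> bm_sp;
  ract : bm_sp -> A -> bm_sp;
  lact_addl : forall a b x, lact (vadd a b) x = vadd (lact a x) (lact b x);
  lact_addr : forall a x y, lact a (vadd x y) = vadd (lact a x) (lact a y);
  lact_scall : forall z a x, lact (vscal z a) x = vscal z (lact a x);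
  lact_scalr : forall z a x, lact a (vscal z x) = vscal z (lact a x);
  ract_addl : forall x y a, ract (vadd x y) a = vadd (ract x a) (ract y a);
  ract_addr : forall x a b, ract x (vadd a b) = vadd (ract x a) (ract x b);
  ract_scall : forall z x a, ract (vscal z x) a = vscal z (ract x a);
  ract_scalr : forall z x a, ract x (vscal z a) = vscal z (ract x a);
  lact_assoc : forall a b x, lact (amul a b) x = lact a (lact b x);
  ract_assoc : forall x a b, ract x (amul a b) = ract (ract x a) b;
  lract_assoc : forall a x b, ract (lact a x) b = lact a (ract x b);
  bm_bounded : exists K, forall a x,
    vnorm (lact a x) <= K * vnorm a * vnorm x /\ vnorm (ract x a) <= K * vnorm x * vnorm a
}.
Arguments lact {_ _}. Arguments ract {_ _}.

Definition Fn {A : BanachAlgebra} (X : BanachBimodule A) := X -> C.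

Definition is_bounded_linear_functional {A} {X : BanachBimodule A} (f : Fn X) : Prop :=
  (forall x y, f (vadd x y) = Cadd (f x) (f y)) /\
  (forall c x, f (vscal c x) = Cmul c (f x)) /\
  (exists K, forall x, Cnorm (f x) <= K * vnorm x).

Definition Fzero {A} {X : BanachBimodule A} : Fn X := fun _ => C0.
Definition Fadd {A} {X : BanachBimodule A} (f g : Fn X) : Fn X := fun x => Cadd (f x) (g x).
Definition Fopp {A} {X : BanachBimodule A} (f : Fn X) : Fn X := fun x => Copp (f x).
Definition Fsub {A} {X : BanachBimodule A} (f g : Fn X) : Fn X := Fadd f (Fopp g).
Definition dlact {A} {X : BanachBimodule A} (a : A) (f : Fn X) : Fn X := fun x => f (ract x a).
Definition dract {A} {X : BanachBimodule A} (f : Fn X) (a : A) : Fn X := fun x => f (lact a x).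

Definition opnorm_le {A} {X : BanachBimodule A} (f : Fn X) (eps : R) : Prop :=
  forall x, Cnorm (f x) <= eps * vnorm x.

Record DirectedSet := {
  ds_car :> Type;
  ds_le : ds_car -> ds_car -> Prop;
  ds_refl : forall i, ds_le i i;
  ds_trans : forall i j k, ds_le i j -> ds_le j k -> ds_le i k;
  ds_directed : forall i j, exists k, ds_le i k /\ ds_le j k;
  ds_inhabited : inhabited ds_car
}.
Arguments ds_le {_}.

(* ---------- n-linear maps A^n -> X^*, represented on lists of length n ---------- *)
Definition Cochain {A} (X : BanachBimodule A) := list A -> Fn X.

Definition set_nth {T} (i : nat) (l : list T) (v : T) : list T :=
  firstn i l ++ v :: skipn (S i) l.

Definition prod_norms {A : BanachAlgebra} (l : list A) : R :=
  fold_right (fun a r => vnorm a * r) 1 l.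

Definition is_BL {A} {X : BanachBimodule A} (n : nat) (T : Cochain X) : Prop :=
  (forall l, length l = n -> is_bounded_linear_functional (T l)) /\
  (forall l i (a b : A) c x, length l = n -> (i < n)%nat ->
     T (set_nth i l (vadd a (vscal c b))) x
     = Cadd (T (set_nth i l a) x) (Cmul c (T (set_nth i l b) x))) /\
  (exists K, forall l, length l = n -> opnorm_le (T l) (K * prod_norms l)).

(* merge the entries at 0-indexed positions k, k+1 *)
Fixpoint mergeAt {A : BanachAlgebra} (k : nat) (l : list A) : list A :=
  match k, l with
  | O, a :: b :: t => amul a b :: t
  | S k', a :: t => a :: mergeAt k' t
  | _, _ => l
  end.

Definition sgn {A} {X : BanachBimodule A} (k : nat) (f : Fn X) : Fn X :=
  if Nat.even k then f else Fopp f.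

Definition coboundary {A} {X : BanachBimodule A} (n : nat) (T : Cochain X) : Cochain X :=
  fun l => match l with
  | [] => Fzero
  | a1 :: rest =>
      Fadd (dlact a1 (T rest))
        (Fadd (fold_right (fun k acc => Fadd (sgn k (T (mergeAt (k - 1) l))) acc)
                 Fzero (seq 1 n))
              (sgn (S n) (dract (T (removelast l)) (last l a1))))
  end.

Definition is_cocycle {A} {X : BanachBimodule A} (n : nat) (T : Cochain X) : Prop :=
  is_BL n T /\ forall l, length l = S n -> forall x, coboundary n T l x = C0.

Definition is_coboundary {A} {X : BanachBimodule A} (n : nat) (U : Cochain X) : Prop :=
  exists S, is_BL (n - 1) S /\
    forall l, length l = n -> forall x, U l x = coboundary (n - 1) S l x.

Definition in_strong_closure_B {A} {X : BanachBimodule A} (n : nat) (T : Cochain X) : Prop :=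
  exists (I : DirectedSet) (U : I -> Cochain X),
    (forall i, is_coboundary n (U i)) /\
    forall l, length l = n -> forall eps, 0 < eps ->
      exists i0, forall i, ds_le i0 i -> opnorm_le (Fsub (U i l) (T l)) eps.

Definition Happ_trivial (A : BanachAlgebra) (X : BanachBimodule A) (n : nat) : Prop :=
  forall T : Cochain X, is_cocycle n T -> in_strong_closure_B n T.

(* approximate amenability; D in Z^1(A,X^* ) is represented by D a := T [a] *)
Definition approx_amenable (A : BanachAlgebra) : Prop :=
  forall (X : BanachBimodule A) (T : Cochain X), is_cocycle 1 T ->
    exists (I : DirectedSet) (f : I -> Fn X),
      (forall i, is_bounded_linear_functional (f i)) /\
      forall a : A, forall eps, 0 < eps ->
        exists i0, forall i, ds_le i0 i ->
          opnorm_le (Fsub (Fsub (dlact a (f i)) (dract (f i) a)) (T [a])) eps.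

(* Approximate amenability is vanishing of approximate H^1 with dual coefficients, since
   bounded derivations into X^* are the 1-cocycles and a.f - f.a is the coboundary of f.
   Higher degrees reduce to degree one by dimension shifting.  For a bimodule X let W be the
   bidual of A (x) X.  An (n+1)-cocycle T into X^* flattens to an n-cocycle T' into W^*,
   T'(a_1..a_n)(w) = w((b, x) |-> T(a_1..a_n, b)(x)), and an n-cochain G into W^* sharpens
   to the (n+1)-cochain (a_1..a_n, b) |-> (x |-> G(a_1..a_n)(b (x) x)) into X^*, whose
   coboundary is the sharpening of the coboundary of G.  If coboundaries delta G_i converge
   strongly to T', the coboundaries of the sharpened G_i converge strongly to T, because
   ||b (x) x|| <= ||b|| ||x||. *)

From Stdlib Require Import Reals List Lra Lia Psatz.
From Stdlib Require Import ClassicalEpsilon ProofIrrelevance FunctionalExtensionality.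
Import ListNotations.
Open Scope R_scope.

(** * Complex numbers *)

Lemma C_ext (z w : C) : Re z = Re w -> Im z = Im w -> z = w.
Proof. destruct z, w; simpl; intros; subst; reflexivity. Qed.

Lemma C_ring : ring_theory C0 C1 Cadd Cmul (fun z w => Cadd z (Copp w)) Copp (@eq C).
Proof. constructor; intros; apply C_ext; simpl; ring. Qed.
Add Ring C_ring : C_ring.

Lemma Cnorm_ge0 (z : C) : 0 <= Cnorm z.
Proof. apply sqrt_pos. Qed.

Lemma Cnorm_sqr (z : C) : Cnorm z * Cnorm z = Re z * Re z + Im z * Im z.
Proof. apply sqrt_sqrt; nra. Qed.

Lemma Cnorm_C0 : Cnorm C0 = 0.
Proof. unfold Cnorm; simpl; rewrite Rmult_0_l, Rplus_0_l; apply sqrt_0. Qed.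

Lemma Cnorm_le_sqr (z : C) (t : R) :
  0 <= t -> Re z * Re z + Im z * Im z <= t * t -> Cnorm z <= t.
Proof. intros Ht H; pose proof (Cnorm_sqr z); pose proof (Cnorm_ge0 z); nra. Qed.

Lemma Cnorm_mul (z w : C) : Cnorm (Cmul z w) = Cnorm z * Cnorm w.
Proof. destruct z, w; unfold Cnorm; simpl; rewrite <- sqrt_mult by nra; f_equal; ring. Qed.

Lemma Cnorm_opp (z : C) : Cnorm (Copp z) = Cnorm z.
Proof. destruct z; unfold Cnorm; simpl; f_equal; ring. Qed.

Lemma Cnorm_m1 : Cnorm (Copp C1) = 1.
Proof. rewrite Cnorm_opp; unfold Cnorm; simpl; rewrite Rmult_0_l, Rplus_0_r, Rmult_1_l; apply sqrt_1. Qed.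

(* The cross term is controlled by Cauchy-Schwarz: (ac+bd)^2 + (ad-bc)^2 = |z|^2 |w|^2. *)
Lemma Cnorm_triangle (z w : C) : Cnorm (Cadd z w) <= Cnorm z + Cnorm w.
Proof.
  pose proof (Cnorm_sqr z) as Hz; pose proof (Cnorm_sqr w) as Hw.
  pose proof (Cnorm_ge0 z); pose proof (Cnorm_ge0 w).
  apply Cnorm_le_sqr; [lra|].
  set (nz := Cnorm z) in *; set (nw := Cnorm w) in *.
  destruct z as [a b], w as [c d]; simpl in *.
  assert (Hcross : a * c + b * d <= nz * nw).
  { assert (Hsq : (a*c + b*d) * (a*c + b*d) <= (nz*nw) * (nz*nw)).
    { replace ((nz*nw) * (nz*nw)) with ((nz*nz) * (nw*nw)) by ring.
      rewrite Hz, Hw; pose proof (pow2_ge_0 (a*d - b*c)); nra. }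
    pose proof (Rmult_le_pos _ _ H H0); nra. }
  nra.
Qed.

Lemma Cnorm_sub_le (z w : C) : Cnorm (Cadd z (Copp w)) <= Cnorm z + Cnorm w.
Proof. rewrite <- (Cnorm_opp w); apply Cnorm_triangle. Qed.

Lemma Cnorm_sub_sym (z w : C) : Cnorm (Cadd z (Copp w)) = Cnorm (Cadd w (Copp z)).
Proof. rewrite <- Cnorm_opp; f_equal; ring. Qed.

Lemma Cnorm_eq0 (z : C) : Cnorm z = 0 -> z = C0.
Proof. intros H; pose proof (Cnorm_sqr z) as E; rewrite H in E; apply C_ext; simpl; nra. Qed.

Lemma Rabs_Re_le (z : C) : Rabs (Re z) <= Cnorm z.
Proof. pose proof (Cnorm_sqr z); pose proof (Cnorm_ge0 z); apply Rabs_le; split; nra. Qed.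

Lemma Rabs_Im_le (z : C) : Rabs (Im z) <= Cnorm z.
Proof. pose proof (Cnorm_sqr z); pose proof (Cnorm_ge0 z); apply Rabs_le; split; nra. Qed.

Lemma Cnorm_le_Rabs (z : C) : Cnorm z <= Rabs (Re z) + Rabs (Im z).
Proof.
  pose proof (Rabs_pos (Re z)); pose proof (Rabs_pos (Im z)).
  assert (E1 : Rabs (Re z) * Rabs (Re z) = Re z * Re z)
    by (rewrite <- Rabs_mult; apply Rabs_pos_eq; nra).
  assert (E2 : Rabs (Im z) * Rabs (Im z) = Im z * Im z)
    by (rewrite <- Rabs_mult; apply Rabs_pos_eq; nra).
  apply Cnorm_le_sqr; nra.
Qed.

Definition Ccv (s : nat -> C) (z : C) : Prop :=
  forall eps, 0 < eps -> exists N, forall n, (N <= n)%nat -> Cnorm (Cadd (s n) (Copp z)) < eps.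

Definition Ccauchy (s : nat -> C) : Prop :=
  forall eps, 0 < eps -> exists N, forall m n, (N <= m)%nat -> (N <= n)%nat ->
    Cnorm (Cadd (s m) (Copp (s n))) < eps.

Lemma Ccauchy_cv (s : nat -> C) : Ccauchy s -> exists z, Ccv s z.
Proof.
  intros H.
  assert (HRe : Cauchy_crit (fun n => Re (s n))).
  { intros eps He; destruct (H eps He) as [N HN]; exists N; intros n m Hn Hm.
    pose proof (Rabs_Re_le (Cadd (s n) (Copp (s m)))); specialize (HN n m Hn Hm).
    unfold Rdist, Rminus; simpl in *; lra. }
  assert (HIm : Cauchy_crit (fun n => Im (s n))).
  { intros eps He; destruct (H eps He) as [N HN]; exists N; intros n m Hn Hm.
    pose proof (Rabs_Im_le (Cadd (s n) (Copp (s m)))); specialize (HN n m Hn Hm).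
    unfold Rdist, Rminus; simpl in *; lra. }
  destruct (R_complete _ HRe) as [l1 Hl1], (R_complete _ HIm) as [l2 Hl2].
  exists (mkC l1 l2); intros eps He.
  destruct (Hl1 (eps/2)) as [N1 HN1]; [lra|]; destruct (Hl2 (eps/2)) as [N2 HN2]; [lra|].
  exists (max N1 N2); intros n Hn.
  specialize (HN1 n ltac:(lia)); specialize (HN2 n ltac:(lia)); unfold Rdist, Rminus in *.
  eapply Rle_lt_trans; [apply Cnorm_le_Rabs|]; simpl; lra.
Qed.

Lemma Ccv_dist_le (s : nat -> C) (z t : C) (c : R) (N : nat) :
  Ccv s z -> (forall n, (N <= n)%nat -> Cnorm (Cadd (s n) (Copp t)) <= c) ->
  Cnorm (Cadd z (Copp t)) <= c.
Proof.
  intros Hs Hb; apply Rnot_lt_le; intros Hlt.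
  destruct (Hs (Cnorm (Cadd z (Copp t)) - c)) as [N1 HN1]; [lra|].
  set (m := max N N1); specialize (HN1 m ltac:(lia)); specialize (Hb m ltac:(lia)).
  pose proof (Cnorm_triangle (Cadd z (Copp (s m))) (Cadd (s m) (Copp t))) as Htri.
  replace (Cadd (Cadd z (Copp (s m))) (Cadd (s m) (Copp t))) with (Cadd z (Copp t)) in Htri by ring.
  rewrite Cnorm_sub_sym in HN1; lra.
Qed.

Lemma Ccv_unique (s : nat -> C) (z w : C) : Ccv s z -> Ccv s w -> z = w.
Proof.
  intros Hz Hw.
  assert (Hzw : Cnorm (Cadd z (Copp w)) <= 0).
  { apply Rle_plus_epsilon; intros eps He; rewrite Rplus_0_l.
    destruct (Hz (eps/2)) as [N1 HN1]; [lra|]; destruct (Hw (eps/2)) as [N2 HN2]; [lra|].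
    set (m := max N1 N2); specialize (HN1 m ltac:(lia)); specialize (HN2 m ltac:(lia)).
    pose proof (Cnorm_triangle (Cadd z (Copp (s m))) (Cadd (s m) (Copp w))) as Htri.
    replace (Cadd (Cadd z (Copp (s m))) (Cadd (s m) (Copp w))) with (Cadd z (Copp w)) in Htri
      by ring.
    rewrite Cnorm_sub_sym in HN1; lra. }
  pose proof (Cnorm_ge0 (Cadd z (Copp w))).
  replace z with (Cadd (Cadd z (Copp w)) w) by ring.
  rewrite (Cnorm_eq0 (Cadd z (Copp w))) by lra; ring.
Qed.

Lemma Ccv_add (s t : nat -> C) (z w : C) :
  Ccv s z -> Ccv t w -> Ccv (fun n => Cadd (s n) (t n)) (Cadd z w).
Proof.
  intros Hs Ht eps He.
  destruct (Hs (eps/2)) as [N1 HN1]; [lra|]; destruct (Ht (eps/2)) as [N2 HN2]; [lra|].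
  exists (max N1 N2); intros n Hn; specialize (HN1 n ltac:(lia)); specialize (HN2 n ltac:(lia)).
  pose proof (Cnorm_triangle (Cadd (s n) (Copp z)) (Cadd (t n) (Copp w))) as Htri.
  replace (Cadd (Cadd (s n) (Copp z)) (Cadd (t n) (Copp w)))
    with (Cadd (Cadd (s n) (t n)) (Copp (Cadd z w))) in Htri by ring.
  lra.
Qed.

Lemma Ccv_scal (c : C) (s : nat -> C) (z : C) :
  Ccv s z -> Ccv (fun n => Cmul c (s n)) (Cmul c z).
Proof.
  intros Hs eps He; pose proof (Cnorm_ge0 c).
  destruct (Hs (eps / (Cnorm c + 1))) as [N HN]; [apply Rdiv_lt_0_compat; lra|].
  exists N; intros n Hn; specialize (HN n Hn).
  replace (Cadd (Cmul c (s n)) (Copp (Cmul c z))) with (Cmul c (Cadd (s n) (Copp z))) by ring.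
  rewrite Cnorm_mul.
  apply Rmult_lt_compat_l with (r := Cnorm c + 1) in HN; [|lra].
  replace ((Cnorm c + 1) * (eps / (Cnorm c + 1))) with eps in HN by (field; lra).
  pose proof (Cnorm_ge0 (Cadd (s n) (Copp z))); nra.
Qed.

(** * Banach spaces and bimodules *)

Lemma vnorm_ge0 (B : BanachSpace) (x : B) : 0 <= vnorm x.
Proof.
  assert (Hx : vadd x (vscal (Copp C1) x) = vscal C0 x).
  { rewrite <- (vscal_1 B x) at 1; rewrite <- vscal_addl; f_equal; ring. }
  pose proof (vnorm_triangle B x (vscal (Copp C1) x)) as Htri.
  rewrite Hx, !vnorm_scal, Cnorm_C0, Cnorm_m1 in Htri; lra.
Qed.

Lemma additive_zero (B : BanachSpace) (f : B -> C) :
  (forall x y, f (vadd x y) = Cadd (f x) (f y)) -> f vzero = C0.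
Proof.
  intros Hf; pose proof (Hf vzero vzero) as E; rewrite vadd_0 in E.
  replace (f vzero) with (Cadd (Cadd (f vzero) (f vzero)) (Copp (f vzero))) by ring.
  rewrite <- E; ring.
Qed.

Lemma additive_opp (B : BanachSpace) (f : B -> C) :
  (forall x y, f (vadd x y) = Cadd (f x) (f y)) -> forall x, f (vopp x) = Copp (f x).
Proof.
  intros Hf x; pose proof (Hf x (vopp x)) as E; rewrite vadd_opp, additive_zero in E by exact Hf.
  replace (f (vopp x)) with (Cadd (Cadd (f x) (f (vopp x))) (Copp (f x))) by ring.
  rewrite <- E; ring.
Qed.

Definition bimod_le {A : BanachAlgebra} (X : BanachBimodule A) (K : R) : Prop :=
  forall (a : A) (x : X),
    vnorm (lact a x) <= K * vnorm a * vnorm x /\ vnorm (ract x a) <= K * vnorm x * vnorm a.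

Lemma bimod_le_exists (A : BanachAlgebra) (X : BanachBimodule A) :
  exists K, 0 <= K /\ bimod_le X K.
Proof.
  destruct (bm_bounded A X) as [K HK]; exists (Rabs K); split; [apply Rabs_pos|].
  intros a x; destruct (HK a x) as [H1 H2].
  pose proof (vnorm_ge0 _ a); pose proof (vnorm_ge0 _ x); pose proof (Rle_abs K).
  assert (0 <= vnorm a * vnorm x) by (apply Rmult_le_pos; auto).
  split; nra.
Qed.

(** * The shifted module *)

(* Bounded bilinear forms on A x X form the dual of the projective tensor product A (x) X,
   with the actions dual to a.(b (x) x) = ab (x) x - a (x) b.x and (b (x) x).a = b (x) x.a;
   [Bidual_mod] is its dual, i.e. the bidual of A (x) X, and [ev b x] is b (x) x in it.
   The tensor product itself is never built. *)

Section Shift.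
Variable A : BanachAlgebra.
Variable X : BanachBimodule A.

Definition bform := A -> X -> C.

Definition bform_le (F : bform) (K : R) : Prop :=
  forall (b : A) (x : X), Cnorm (F b x) <= K * vnorm b * vnorm x.

Definition is_bform (F : bform) : Prop :=
  (forall b x y, F b (vadd x y) = Cadd (F b x) (F b y)) /\
  (forall b c x, F b (vscal c x) = Cmul c (F b x)) /\
  (forall b1 b2 x, F (vadd b1 b2) x = Cadd (F b1 x) (F b2 x)) /\
  (forall c b x, F (vscal c b) x = Cmul c (F b x)) /\
  (exists K, 0 <= K /\ bform_le F K).

Definition bform_add (F G : bform) : bform := fun b x => Cadd (F b x) (G b x).
Definition bform_scal (c : C) (F : bform) : bform := fun b x => Cmul c (F b x).
Definition bform_lact (a : A) (F : bform) : bform := fun b x => F b (ract x a).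
Definition bform_ract (F : bform) (a : A) : bform :=
  fun b x => Cadd (F (amul a b) x) (Copp (F a (lact b x))).

Lemma is_bform_zero : is_bform (fun _ _ => C0).
Proof.
  repeat split; intros; try ring.
  exists 0; split; [lra|]; intros b x; rewrite Cnorm_C0; lra.
Qed.

Lemma is_bform_add (F G : bform) : is_bform F -> is_bform G -> is_bform (bform_add F G).
Proof.
  intros (F1 & F2 & F3 & F4 & K1 & HK1 & B1) (G1 & G2 & G3 & G4 & K2 & HK2 & B2).
  unfold bform_add; repeat split; intros.
  - rewrite F1, G1; ring.
  - rewrite F2, G2; ring.
  - rewrite F3, G3; ring.
  - rewrite F4, G4; ring.
  - exists (K1 + K2); split; [lra|]; intros b x.
    eapply Rle_trans; [apply Cnorm_triangle|].
    specialize (B1 b x); specialize (B2 b x); lra.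
Qed.

Lemma is_bform_scal (c : C) (F : bform) : is_bform F -> is_bform (bform_scal c F).
Proof.
  intros (F1 & F2 & F3 & F4 & K & HK & B); pose proof (Cnorm_ge0 c).
  unfold bform_scal; repeat split; intros.
  - rewrite F1; ring.
  - rewrite F2; ring.
  - rewrite F3; ring.
  - rewrite F4; ring.
  - exists (Cnorm c * K); split; [nra|]; intros b x.
    rewrite Cnorm_mul, !Rmult_assoc; apply Rmult_le_compat_l; [lra|].
    rewrite <- !Rmult_assoc; apply B.
Qed.

Section ActionBounds.
Variable KX : R.
Hypothesis KX_bound : bimod_le X KX.

Lemma bform_ract_le (F : bform) (K : R) (a : A) :
  0 <= K -> bform_le F K -> bform_le (bform_ract F a) (K * ((1 + KX) * vnorm a)).
Proof.
  intros HK B b x; unfold bform_ract.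
  eapply Rle_trans; [apply Cnorm_sub_le|].
  pose proof (B (amul a b) x) as B1; pose proof (B a (lact b x)) as B2.
  pose proof (amul_norm A a b); pose proof (proj1 (KX_bound b x)).
  pose proof (vnorm_ge0 _ a); pose proof (vnorm_ge0 _ b); pose proof (vnorm_ge0 _ x).
  pose proof (vnorm_ge0 _ (amul a b)); pose proof (vnorm_ge0 _ (lact b x)).
  assert (K * vnorm (amul a b) * vnorm x <= K * (vnorm a * vnorm b) * vnorm x).
  { apply Rmult_le_compat_r; auto; apply Rmult_le_compat_l; auto. }
  assert (K * vnorm a * vnorm (lact b x) <= K * vnorm a * (KX * vnorm b * vnorm x)).
  { apply Rmult_le_compat_l; auto; apply Rmult_le_pos; auto. }
  nra.
Qed.

Lemma bform_lact_le (F : bform) (K : R) (a : A) :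
  0 <= K -> bform_le F K -> bform_le (bform_lact a F) (K * ((1 + KX) * vnorm a)).
Proof.
  intros HK B b x; unfold bform_lact.
  eapply Rle_trans; [apply B|].
  pose proof (proj2 (KX_bound a x)).
  pose proof (vnorm_ge0 _ a); pose proof (vnorm_ge0 _ b); pose proof (vnorm_ge0 _ x).
  pose proof (vnorm_ge0 _ (ract x a)).
  assert (K * vnorm b * vnorm (ract x a) <= K * vnorm b * (KX * vnorm x * vnorm a)).
  { apply Rmult_le_compat_l; auto; apply Rmult_le_pos; auto. }
  assert (0 <= K * vnorm b * vnorm x * vnorm a) by (repeat apply Rmult_le_pos; auto).
  nra.
Qed.

End ActionBounds.

Lemma is_bform_ract (F : bform) (a : A) : is_bform F -> is_bform (bform_ract F a).
Proof.
  intros (F1 & F2 & F3 & F4 & K & HK & B); unfold bform_ract; repeat split; intros.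
  - rewrite lact_addr, !F1; ring.
  - rewrite lact_scalr, !F2; ring.
  - rewrite amul_addr, lact_addl, !F3, !F1; ring.
  - rewrite amul_scalr, lact_scall, !F4, !F2; ring.
  - destruct (bimod_le_exists A X) as (KX & HKX & HX); pose proof (vnorm_ge0 _ a).
    exists (K * ((1 + KX) * vnorm a)); split; [apply Rmult_le_pos; [|apply Rmult_le_pos]; lra|].
    apply (bform_ract_le KX HX); auto.
Qed.

Lemma is_bform_lact (a : A) (F : bform) : is_bform F -> is_bform (bform_lact a F).
Proof.
  intros (F1 & F2 & F3 & F4 & K & HK & B); unfold bform_lact; repeat split; intros.
  - rewrite ract_addl, !F1; ring.
  - rewrite ract_scall, !F2; ring.
  - rewrite !F3; ring.
  - rewrite !F4; ring.
  - destruct (bimod_le_exists A X) as (KX & HKX & HX); pose proof (vnorm_ge0 _ a).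
    exists (K * ((1 + KX) * vnorm a)); split; [apply Rmult_le_pos; [|apply Rmult_le_pos]; lra|].
    apply (bform_lact_le KX HX); auto.
Qed.

Definition BForm := {F : bform | is_bform F}.

Definition bf_zero : BForm := exist _ _ is_bform_zero.
Definition bf_add (F G : BForm) : BForm := exist _ _ (is_bform_add _ _ (proj2_sig F) (proj2_sig G)).
Definition bf_scal (c : C) (F : BForm) : BForm := exist _ _ (is_bform_scal c _ (proj2_sig F)).
Definition bf_lact (a : A) (F : BForm) : BForm := exist _ _ (is_bform_lact a _ (proj2_sig F)).
Definition bf_ract (F : BForm) (a : A) : BForm := exist _ _ (is_bform_ract _ a (proj2_sig F)).

Lemma bf_ext (F G : BForm) : (forall b x, proj1_sig F b x = proj1_sig G b x) -> F = G.
Proof.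
  destruct F as [f Hf], G as [g Hg]; simpl; intros H.
  assert (f = g) by (do 2 (apply functional_extensionality; intro); auto).
  subst; f_equal; apply proof_irrelevance.
Qed.

Lemma bf_le_exists (F : BForm) : exists K, 0 <= K /\ bform_le (proj1_sig F) K.
Proof. exact (proj2 (proj2 (proj2 (proj2 (proj2_sig F))))). Qed.

Definition bdual_le (w : BForm -> C) (M : R) : Prop :=
  forall F K, 0 <= K -> bform_le (proj1_sig F) K -> Cnorm (w F) <= M * K.

Definition is_bdual (w : BForm -> C) : Prop :=
  (forall F G, w (bf_add F G) = Cadd (w F) (w G)) /\
  (forall c F, w (bf_scal c F) = Cmul c (w F)) /\
  (exists M, 0 <= M /\ bdual_le w M).

Definition Bidual := {w : BForm -> C | is_bdual w}.

Lemma bd_ext (v w : Bidual) : (forall F, proj1_sig v F = proj1_sig w F) -> v = w.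
Proof.
  destruct v as [v Hv], w as [w Hw]; simpl; intros H.
  assert (v = w) by (apply functional_extensionality; auto).
  subst; f_equal; apply proof_irrelevance.
Qed.

Lemma bd_add_apply (w : Bidual) (F G : BForm) :
  proj1_sig w (bf_add F G) = Cadd (proj1_sig w F) (proj1_sig w G).
Proof. exact (proj1 (proj2_sig w) F G). Qed.

Lemma bd_scal_apply (w : Bidual) (c : C) (F : BForm) :
  proj1_sig w (bf_scal c F) = Cmul c (proj1_sig w F).
Proof. exact (proj1 (proj2 (proj2_sig w)) c F). Qed.

Lemma bd_zero_apply (w : Bidual) : proj1_sig w bf_zero = C0.
Proof.
  replace bf_zero with (bf_scal C0 bf_zero) by (apply bf_ext; intros; simpl; unfold bform_scal; ring).
  rewrite bd_scal_apply; ring.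
Qed.

Lemma is_bdual_zero : is_bdual (fun _ => C0).
Proof.
  repeat split; intros; try ring.
  exists 0; split; [lra|]; intros F K _ _; rewrite Cnorm_C0; lra.
Qed.

Lemma is_bdual_add (v w : BForm -> C) :
  is_bdual v -> is_bdual w -> is_bdual (fun F => Cadd (v F) (w F)).
Proof.
  intros (V1 & V2 & M1 & HM1 & B1) (W1 & W2 & M2 & HM2 & B2); repeat split; intros.
  - rewrite V1, W1; ring.
  - rewrite V2, W2; ring.
  - exists (M1 + M2); split; [lra|]; intros F K HK HF.
    eapply Rle_trans; [apply Cnorm_triangle|].
    specialize (B1 F K HK HF); specialize (B2 F K HK HF); lra.
Qed.

Lemma is_bdual_scal (c : C) (w : BForm -> C) : is_bdual w -> is_bdual (fun F => Cmul c (w F)).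
Proof.
  intros (W1 & W2 & M & HM & B); pose proof (Cnorm_ge0 c); repeat split; intros.
  - rewrite W1; ring.
  - rewrite W2; ring.
  - exists (Cnorm c * M); split; [nra|]; intros F K HK HF.
    rewrite Cnorm_mul, Rmult_assoc; apply Rmult_le_compat_l; auto.
Qed.

Lemma is_bdual_opp (w : BForm -> C) : is_bdual w -> is_bdual (fun F => Copp (w F)).
Proof.
  intros Hw; replace (fun F => Copp (w F)) with (fun F => Cmul (Copp C1) (w F)).
  - apply is_bdual_scal, Hw.
  - apply functional_extensionality; intros; ring.
Qed.

Definition bd_zero : Bidual := exist _ _ is_bdual_zero.
Definition bd_add (v w : Bidual) : Bidual := exist _ _ (is_bdual_add _ _ (proj2_sig v) (proj2_sig w)).
Definition bd_opp (w : Bidual) : Bidual := exist _ _ (is_bdual_opp _ (proj2_sig w)).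
Definition bd_scal (c : C) (w : Bidual) : Bidual := exist _ _ (is_bdual_scal c _ (proj2_sig w)).

(* Stdlib only provides suprema: the norm, the least admissible bound, is minus the
   supremum of the negated bounds. *)
Definition neg_bounds (w : Bidual) (y : R) : Prop := 0 <= - y /\ bdual_le (proj1_sig w) (- y).

Lemma neg_bounds_bound (w : Bidual) : bound (neg_bounds w).
Proof. exists 0; intros y [H _]; lra. Qed.

Lemma neg_bounds_inhabited (w : Bidual) : exists y, neg_bounds w y.
Proof.
  destruct (proj2 (proj2 (proj2_sig w))) as (M & HM & B).
  exists (- M); unfold neg_bounds; rewrite Ropp_involutive; auto.
Qed.

Definition bd_norm (w : Bidual) : R :=
  - proj1_sig (completeness _ (neg_bounds_bound w) (neg_bounds_inhabited w)).

Lemma bd_norm_ge0 (w : Bidual) : 0 <= bd_norm w.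
Proof.
  unfold bd_norm; destruct completeness as [m [Hub Hlub]]; simpl.
  assert (m <= 0) by (apply Hlub; intros y [H _]; lra); lra.
Qed.

Lemma bd_norm_le (w : Bidual) (M : R) : 0 <= M -> bdual_le (proj1_sig w) M -> bd_norm w <= M.
Proof.
  intros HM B; unfold bd_norm; destruct completeness as [m [Hub Hlub]]; simpl.
  assert (- M <= m) by (apply Hub; unfold neg_bounds; rewrite Ropp_involutive; auto); lra.
Qed.

Lemma bd_norm_bound (w : Bidual) : bdual_le (proj1_sig w) (bd_norm w).
Proof.
  intros F K HK HF; unfold bd_norm; destruct completeness as [m [Hub Hlub]]; simpl.
  destruct (Req_dec K 0) as [-> | HK0].
  - destruct (neg_bounds_inhabited w) as [y [_ B]].
    specialize (B F 0 HK HF); rewrite Rmult_0_r in *; exact B.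
  - apply Rnot_lt_le; intros Hlt.
    set (t := Cnorm (proj1_sig w F) / K).
    assert (Ht : - m < t).
    { unfold t; apply Rmult_lt_reg_r with K; [lra|]; unfold Rdiv.
      rewrite Rmult_assoc, Rinv_l by lra; lra. }
    assert (m <= - t); [|lra].
    apply Hlub; intros y [Hy B]; specialize (B F K HK HF).
    assert (t <= - y); [|lra].
    unfold t, Rdiv; apply Rmult_le_reg_r with K; [lra|].
    rewrite Rmult_assoc, Rinv_l by lra; lra.
Qed.

Lemma bd_add_assoc (u v w : Bidual) : bd_add u (bd_add v w) = bd_add (bd_add u v) w.
Proof. apply bd_ext; intros; simpl; ring. Qed.
Lemma bd_add_comm (v w : Bidual) : bd_add v w = bd_add w v.
Proof. apply bd_ext; intros; simpl; ring. Qed.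
Lemma bd_add_0 (w : Bidual) : bd_add bd_zero w = w.
Proof. apply bd_ext; intros; simpl; ring. Qed.
Lemma bd_add_opp (w : Bidual) : bd_add w (bd_opp w) = bd_zero.
Proof. apply bd_ext; intros; simpl; ring. Qed.
Lemma bd_scal_addl (c d : C) (w : Bidual) : bd_scal (Cadd c d) w = bd_add (bd_scal c w) (bd_scal d w).
Proof. apply bd_ext; intros; simpl; ring. Qed.
Lemma bd_scal_addr (c : C) (v w : Bidual) : bd_scal c (bd_add v w) = bd_add (bd_scal c v) (bd_scal c w).
Proof. apply bd_ext; intros; simpl; ring. Qed.
Lemma bd_scal_mul (c d : C) (w : Bidual) : bd_scal (Cmul c d) w = bd_scal c (bd_scal d w).
Proof. apply bd_ext; intros; simpl; ring. Qed.
Lemma bd_scal_1 (w : Bidual) : bd_scal C1 w = w.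
Proof. apply bd_ext; intros; simpl; ring. Qed.

Lemma bd_norm_eq0 (w : Bidual) : bd_norm w = 0 -> w = bd_zero.
Proof.
  intros H; apply bd_ext; intros F; simpl.
  destruct (bf_le_exists F) as (K & HK & HF).
  pose proof (bd_norm_bound w F K HK HF) as B; rewrite H, Rmult_0_l in B.
  pose proof (Cnorm_ge0 (proj1_sig w F)); apply Cnorm_eq0; lra.
Qed.

Lemma bd_norm_0 : bd_norm bd_zero = 0.
Proof.
  apply Rle_antisym; [|apply bd_norm_ge0].
  apply bd_norm_le; [lra|]; intros F K _ _; simpl; rewrite Cnorm_C0; lra.
Qed.

Lemma bd_norm_triangle (v w : Bidual) : bd_norm (bd_add v w) <= bd_norm v + bd_norm w.
Proof.
  pose proof (bd_norm_ge0 v); pose proof (bd_norm_ge0 w).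
  apply bd_norm_le; [lra|]; intros F K HK HF; simpl.
  eapply Rle_trans; [apply Cnorm_triangle|].
  pose proof (bd_norm_bound v F K HK HF); pose proof (bd_norm_bound w F K HK HF); lra.
Qed.

Lemma bd_norm_scal_le (c : C) (w : Bidual) : bd_norm (bd_scal c w) <= Cnorm c * bd_norm w.
Proof.
  pose proof (Cnorm_ge0 c); pose proof (bd_norm_ge0 w).
  apply bd_norm_le; [nra|]; intros F K HK HF; simpl.
  rewrite Cnorm_mul, Rmult_assoc; apply Rmult_le_compat_l; auto; apply bd_norm_bound; auto.
Qed.

Lemma bd_norm_scal (c : C) (w : Bidual) : bd_norm (bd_scal c w) = Cnorm c * bd_norm w.
Proof.
  apply Rle_antisym; [apply bd_norm_scal_le|].
  pose proof (Cnorm_ge0 c); pose proof (bd_norm_ge0 (bd_scal c w)).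
  destruct (Req_dec (Cnorm c) 0) as [Hc | Hc].
  - rewrite Hc, Rmult_0_l; auto.
  - assert (Hw : bd_norm w <= bd_norm (bd_scal c w) / Cnorm c).
    { apply bd_norm_le; [unfold Rdiv; apply Rmult_le_pos; [|left; apply Rinv_0_lt_compat]; lra|]; intros F K HK HF.
      pose proof (bd_norm_bound (bd_scal c w) F K HK HF) as B; simpl in B.
      rewrite Cnorm_mul in B.
      apply Rmult_le_reg_l with (Cnorm c); [lra|].
      replace (Cnorm c * (bd_norm (bd_scal c w) / Cnorm c * K))
        with (bd_norm (bd_scal c w) * K) by (field; lra); exact B. }
    apply Rmult_le_compat_l with (r := Cnorm c) in Hw; [|lra].
    replace (Cnorm c * (bd_norm (bd_scal c w) / Cnorm c)) with (bd_norm (bd_scal c w)) in Hw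
      by (field; lra); exact Hw.
Qed.

Section Completeness.
Variable u : nat -> Bidual.
Hypothesis u_cauchy : forall eps, 0 < eps -> exists N, forall m n, (N <= m)%nat -> (N <= n)%nat ->
  bd_norm (bd_add (u m) (bd_opp (u n))) < eps.

Lemma bd_dist_bound (m n : nat) (F : BForm) (K : R) : 0 <= K -> bform_le (proj1_sig F) K ->
  Cnorm (Cadd (proj1_sig (u m) F) (Copp (proj1_sig (u n) F)))
  <= bd_norm (bd_add (u m) (bd_opp (u n))) * K.
Proof. intros; apply (bd_norm_bound (bd_add (u m) (bd_opp (u n)))); auto. Qed.

Lemma bd_cauchy_apply (F : BForm) : Ccauchy (fun n => proj1_sig (u n) F).
Proof.
  intros eps He; destruct (bf_le_exists F) as (K & HK & HF).
  destruct (u_cauchy (eps / (K + 1))) as [N HN]; [apply Rdiv_lt_0_compat; lra|].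
  exists N; intros m n Hm Hn; specialize (HN m n Hm Hn).
  pose proof (bd_dist_bound m n F K HK HF).
  apply Rmult_lt_compat_l with (r := K + 1) in HN; [|lra].
  replace ((K + 1) * (eps / (K + 1))) with eps in HN by (field; lra).
  pose proof (bd_norm_ge0 (bd_add (u m) (bd_opp (u n)))); nra.
Qed.

Variable L : BForm -> C.
Hypothesis u_cv : forall F, Ccv (fun n => proj1_sig (u n) F) (L F).

Lemma is_bdual_limit : is_bdual L.
Proof.
  split; [|split].
  - intros F G; apply (Ccv_unique (fun n => proj1_sig (u n) (bf_add F G))); [apply u_cv|].
    replace (fun n => proj1_sig (u n) (bf_add F G))
      with (fun n => Cadd (proj1_sig (u n) F) (proj1_sig (u n) G))
      by (apply functional_extensionality; intros; symmetry; apply bd_add_apply).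
    apply Ccv_add; apply u_cv.
  - intros c F; apply (Ccv_unique (fun n => proj1_sig (u n) (bf_scal c F))); [apply u_cv|].
    replace (fun n => proj1_sig (u n) (bf_scal c F))
      with (fun n => Cmul c (proj1_sig (u n) F))
      by (apply functional_extensionality; intros; symmetry; apply bd_scal_apply).
    apply Ccv_scal, u_cv.
  - destruct (u_cauchy 1) as [N HN]; [lra|].
    exists (bd_norm (u N) + 1); split; [pose proof (bd_norm_ge0 (u N)); lra|].
    intros F K HK HF.
    replace (L F) with (Cadd (L F) (Copp C0)) by ring.
    apply (Ccv_dist_le _ _ _ _ N (u_cv F)); intros n Hn.
    replace (Cadd (proj1_sig (u n) F) (Copp C0)) with
      (Cadd (Cadd (proj1_sig (u n) F) (Copp (proj1_sig (u N) F))) (proj1_sig (u N) F)) by ring.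
    eapply Rle_trans; [apply Cnorm_triangle|].
    pose proof (bd_dist_bound n N F K HK HF); pose proof (bd_norm_bound (u N) F K HK HF).
    specialize (HN n N Hn (le_n N)); nra.
Qed.

Lemma bd_cv_limit : forall eps, 0 < eps -> exists N, forall n, (N <= n)%nat ->
  bd_norm (bd_add (u n) (bd_opp (exist _ L is_bdual_limit))) < eps.
Proof.
  intros eps He; destruct (u_cauchy (eps/2)) as [N HN]; [lra|]; exists N; intros n Hn.
  enough (bd_norm (bd_add (u n) (bd_opp (exist _ L is_bdual_limit))) <= eps / 2) by lra.
  apply bd_norm_le; [lra|]; intros F K HK HF; simpl.
  rewrite Cnorm_sub_sym; apply (Ccv_dist_le _ _ _ _ N (u_cv F)); intros m Hm.
  specialize (HN m n Hm Hn); pose proof (bd_dist_bound m n F K HK HF); nra.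
Qed.

End Completeness.

Lemma bd_complete (u : nat -> Bidual) :
  (forall eps, 0 < eps -> exists N, forall m n, (N <= m)%nat -> (N <= n)%nat ->
      bd_norm (bd_add (u m) (bd_opp (u n))) < eps) ->
  exists l, forall eps, 0 < eps -> exists N, forall n, (N <= n)%nat ->
      bd_norm (bd_add (u n) (bd_opp l)) < eps.
Proof.
  intros Hu.
  destruct (choice (fun F z => Ccv (fun n => proj1_sig (u n) F) z)) as [L HL].
  { intros F; apply Ccauchy_cv, bd_cauchy_apply, Hu. }
  exists (exist _ L (is_bdual_limit u Hu L HL)); apply bd_cv_limit.
Qed.

Definition Bidual_space : BanachSpace := {|
  bs_car := Bidual; vzero := bd_zero; vadd := bd_add; vopp := bd_opp; vscal := bd_scal;
  vnorm := bd_norm;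
  vadd_assoc := bd_add_assoc; vadd_comm := bd_add_comm; vadd_0 := bd_add_0;
  vadd_opp := bd_add_opp; vscal_addl := bd_scal_addl; vscal_addr := bd_scal_addr;
  vscal_mul := bd_scal_mul; vscal_1 := bd_scal_1; vnorm_eq0 := bd_norm_eq0;
  vnorm_0 := bd_norm_0; vnorm_triangle := bd_norm_triangle; vnorm_scal := bd_norm_scal;
  vcomplete := bd_complete |}.

Ltac bf_unfold := apply bf_ext; intros; simpl;
  unfold bform_add, bform_scal, bform_lact, bform_ract.

Lemma bf_ract_add (F G : BForm) (a : A) : bf_ract (bf_add F G) a = bf_add (bf_ract F a) (bf_ract G a).
Proof. bf_unfold; ring. Qed.
Lemma bf_ract_scal (c : C) (F : BForm) (a : A) : bf_ract (bf_scal c F) a = bf_scal c (bf_ract F a).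
Proof. bf_unfold; ring. Qed.
Lemma bf_lact_add (a : A) (F G : BForm) : bf_lact a (bf_add F G) = bf_add (bf_lact a F) (bf_lact a G).
Proof. bf_unfold; ring. Qed.
Lemma bf_lact_scal (a : A) (c : C) (F : BForm) : bf_lact a (bf_scal c F) = bf_scal c (bf_lact a F).
Proof. bf_unfold; ring. Qed.

Lemma bf_ract_addr (F : BForm) (a b : A) : bf_ract F (vadd a b) = bf_add (bf_ract F a) (bf_ract F b).
Proof. pose proof (proj2_sig F) as (F1 & F2 & F3 & F4 & _); bf_unfold; rewrite amul_addl, !F3; ring. Qed.
Lemma bf_ract_scalr (F : BForm) (z : C) (a : A) : bf_ract F (vscal z a) = bf_scal z (bf_ract F a).
Proof. pose proof (proj2_sig F) as (F1 & F2 & F3 & F4 & _); bf_unfold; rewrite amul_scall, !F4; ring. Qed.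
Lemma bf_lact_addl (a b : A) (F : BForm) : bf_lact (vadd a b) F = bf_add (bf_lact a F) (bf_lact b F).
Proof. pose proof (proj2_sig F) as (F1 & F2 & F3 & F4 & _); bf_unfold; rewrite ract_addr, F1; ring. Qed.
Lemma bf_lact_scall (z : C) (a : A) (F : BForm) : bf_lact (vscal z a) F = bf_scal z (bf_lact a F).
Proof. pose proof (proj2_sig F) as (F1 & F2 & F3 & F4 & _); bf_unfold; rewrite ract_scalr, F2; ring. Qed.

Lemma bf_ract_assoc (F : BForm) (a b : A) : bf_ract F (amul a b) = bf_ract (bf_ract F a) b.
Proof. bf_unfold; rewrite amul_assoc, lact_assoc; ring. Qed.
Lemma bf_lact_assoc (a b : A) (F : BForm) : bf_lact (amul a b) F = bf_lact a (bf_lact b F).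
Proof. bf_unfold; rewrite ract_assoc; reflexivity. Qed.
Lemma bf_lract_assoc (a b : A) (F : BForm) : bf_ract (bf_lact b F) a = bf_lact b (bf_ract F a).
Proof. bf_unfold; rewrite lract_assoc; reflexivity. Qed.

Section Composition.
Variable g : BForm -> BForm.
Variable c : R.
Hypothesis c_ge0 : 0 <= c.
Hypothesis g_add : forall F G, g (bf_add F G) = bf_add (g F) (g G).
Hypothesis g_scal : forall z F, g (bf_scal z F) = bf_scal z (g F).
Hypothesis g_le : forall F K, 0 <= K -> bform_le (proj1_sig F) K -> bform_le (proj1_sig (g F)) (K * c).

Lemma bdual_le_comp (w : Bidual) : bdual_le (fun F => proj1_sig w (g F)) (bd_norm w * c).
Proof.
  intros F K HK HF; rewrite Rmult_assoc, (Rmult_comm c).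
  apply bd_norm_bound; [apply Rmult_le_pos|apply g_le]; auto.
Qed.

Lemma is_bdual_comp (w : Bidual) : is_bdual (fun F => proj1_sig w (g F)).
Proof.
  repeat split; intros.
  - rewrite g_add; apply bd_add_apply.
  - rewrite g_scal; apply bd_scal_apply.
  - exists (bd_norm w * c); split; [apply Rmult_le_pos; auto; apply bd_norm_ge0|].
    apply bdual_le_comp.
Qed.

End Composition.

Lemma bf_act_le_exists : exists KX, 0 <= KX /\ forall a F K, 0 <= K -> bform_le (proj1_sig F) K ->
  bform_le (proj1_sig (bf_ract F a)) (K * ((1 + KX) * vnorm a)) /\
  bform_le (proj1_sig (bf_lact a F)) (K * ((1 + KX) * vnorm a)).
Proof.
  destruct (bimod_le_exists A X) as (KX & HKX & HX); exists KX; split; auto.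
  intros a F K HK HF; split; [apply bform_ract_le|apply bform_lact_le]; auto.
Qed.

Lemma is_bdual_lact (a : A) (w : Bidual) : is_bdual (fun F => proj1_sig w (bf_ract F a)).
Proof.
  destruct bf_act_le_exists as (KX & HKX & HK); pose proof (vnorm_ge0 _ a).
  apply (is_bdual_comp _ ((1 + KX) * vnorm a)); [nra| |intros; apply bf_ract_scal|].
  - intros; apply bf_ract_add.
  - intros; apply HK; auto.
Qed.

Lemma is_bdual_ract (a : A) (w : Bidual) : is_bdual (fun F => proj1_sig w (bf_lact a F)).
Proof.
  destruct bf_act_le_exists as (KX & HKX & HK); pose proof (vnorm_ge0 _ a).
  apply (is_bdual_comp _ ((1 + KX) * vnorm a)); [nra| |intros; apply bf_lact_scal|].
  - intros; apply bf_lact_add.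
  - intros; apply HK; auto.
Qed.

Definition bd_lact (a : A) (w : Bidual) : Bidual := exist _ _ (is_bdual_lact a w).
Definition bd_ract (w : Bidual) (a : A) : Bidual := exist _ _ (is_bdual_ract a w).

Lemma bd_lact_addl (a b : A) (w : Bidual) : bd_lact (vadd a b) w = bd_add (bd_lact a w) (bd_lact b w).
Proof. apply bd_ext; intros; simpl; rewrite bf_ract_addr; apply bd_add_apply. Qed.
Lemma bd_lact_addr (a : A) (v w : Bidual) : bd_lact a (bd_add v w) = bd_add (bd_lact a v) (bd_lact a w).
Proof. apply bd_ext; intros; reflexivity. Qed.
Lemma bd_lact_scall (z : C) (a : A) (w : Bidual) : bd_lact (vscal z a) w = bd_scal z (bd_lact a w).
Proof. apply bd_ext; intros; simpl; rewrite bf_ract_scalr; apply bd_scal_apply. Qed.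
Lemma bd_lact_scalr (z : C) (a : A) (w : Bidual) : bd_lact a (bd_scal z w) = bd_scal z (bd_lact a w).
Proof. apply bd_ext; intros; reflexivity. Qed.
Lemma bd_ract_addl (v w : Bidual) (a : A) : bd_ract (bd_add v w) a = bd_add (bd_ract v a) (bd_ract w a).
Proof. apply bd_ext; intros; reflexivity. Qed.
Lemma bd_ract_addr (w : Bidual) (a b : A) : bd_ract w (vadd a b) = bd_add (bd_ract w a) (bd_ract w b).
Proof. apply bd_ext; intros; simpl; rewrite bf_lact_addl; apply bd_add_apply. Qed.
Lemma bd_ract_scall (z : C) (w : Bidual) (a : A) : bd_ract (bd_scal z w) a = bd_scal z (bd_ract w a).
Proof. apply bd_ext; intros; reflexivity. Qed.
Lemma bd_ract_scalr (z : C) (w : Bidual) (a : A) : bd_ract w (vscal z a) = bd_scal z (bd_ract w a).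
Proof. apply bd_ext; intros; simpl; rewrite bf_lact_scall; apply bd_scal_apply. Qed.
Lemma bd_lact_assoc (a b : A) (w : Bidual) : bd_lact (amul a b) w = bd_lact a (bd_lact b w).
Proof. apply bd_ext; intros; simpl; rewrite bf_ract_assoc; reflexivity. Qed.
Lemma bd_ract_assoc (w : Bidual) (a b : A) : bd_ract w (amul a b) = bd_ract (bd_ract w a) b.
Proof. apply bd_ext; intros; simpl; rewrite bf_lact_assoc; reflexivity. Qed.
Lemma bd_lract_assoc (a : A) (w : Bidual) (b : A) : bd_ract (bd_lact a w) b = bd_lact a (bd_ract w b).
Proof. apply bd_ext; intros; simpl; rewrite bf_lract_assoc; reflexivity. Qed.

Lemma bd_act_bounded : exists K, forall (a : A) (w : Bidual),
  bd_norm (bd_lact a w) <= K * vnorm a * bd_norm w /\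
  bd_norm (bd_ract w a) <= K * bd_norm w * vnorm a.
Proof.
  destruct bf_act_le_exists as (KX & HKX & HK); exists (1 + KX); intros a w.
  pose proof (vnorm_ge0 _ a); pose proof (bd_norm_ge0 w).
  assert (Hc : 0 <= (1 + KX) * vnorm a) by nra.
  split.
  - replace ((1 + KX) * vnorm a * bd_norm w) with (bd_norm w * ((1 + KX) * vnorm a)) by ring.
    apply bd_norm_le; [nra|].
    apply (bdual_le_comp (fun F => bf_ract F a)); auto; intros; apply HK; auto.
  - replace ((1 + KX) * bd_norm w * vnorm a) with (bd_norm w * ((1 + KX) * vnorm a)) by ring.
    apply bd_norm_le; [nra|].
    apply (bdual_le_comp (bf_lact a)); auto; intros; apply HK; auto.
Qed.

Definition Bidual_mod : BanachBimodule A := {|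
  bm_sp := Bidual_space; lact := bd_lact; ract := bd_ract;
  lact_addl := bd_lact_addl; lact_addr := bd_lact_addr;
  lact_scall := bd_lact_scall; lact_scalr := bd_lact_scalr;
  ract_addl := bd_ract_addl; ract_addr := bd_ract_addr;
  ract_scall := bd_ract_scall; ract_scalr := bd_ract_scalr;
  lact_assoc := bd_lact_assoc; ract_assoc := bd_ract_assoc; lract_assoc := bd_lract_assoc;
  bm_bounded := bd_act_bounded |}.

Lemma is_bdual_ev (b : A) (x : X) : is_bdual (fun F => proj1_sig F b x).
Proof.
  repeat split; intros; try reflexivity.
  exists (vnorm b * vnorm x); split; [apply Rmult_le_pos; apply vnorm_ge0|].
  intros F K HK HF; specialize (HF b x); nra.
Qed.

Definition ev (b : A) (x : X) : Bidual := exist _ _ (is_bdual_ev b x).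

Lemma bd_norm_ev (b : A) (x : X) : bd_norm (ev b x) <= vnorm b * vnorm x.
Proof.
  apply bd_norm_le; [apply Rmult_le_pos; apply vnorm_ge0|].
  intros F K HK HF; simpl; specialize (HF b x); nra.
Qed.

Lemma ev_ract (b : A) (x : X) (a : A) : bd_ract (ev b x) a = ev b (ract x a).
Proof. apply bd_ext; reflexivity. Qed.

Lemma ev_lact (a b : A) (x : X) :
  bd_lact a (ev b x) = bd_add (ev (amul a b) x) (bd_opp (ev a (lact b x))).
Proof. apply bd_ext; reflexivity. Qed.

Lemma ev_addr (b : A) (x y : X) : ev b (vadd x y) = bd_add (ev b x) (ev b y).
Proof. apply bd_ext; intros F; exact (proj1 (proj2_sig F) b x y). Qed.

Lemma ev_scalr (b : A) (c : C) (x : X) : ev b (vscal c x) = bd_scal c (ev b x).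
Proof. apply bd_ext; intros F; exact (proj1 (proj2 (proj2_sig F)) b c x). Qed.

Lemma ev_linl (a b : A) (c : C) (x : X) :
  ev (vadd a (vscal c b)) x = bd_add (ev a x) (bd_scal c (ev b x)).
Proof.
  apply bd_ext; intros F; pose proof (proj2_sig F) as (_ & _ & F3 & F4 & _); simpl.
  rewrite F3, F4; reflexivity.
Qed.

End Shift.

Arguments ev {A X}.
Arguments bd_add {A X}. Arguments bd_opp {A X}. Arguments bd_scal {A X}.
Arguments bd_norm {A X}. Arguments bd_lact {A X}. Arguments bd_ract {A X}.

(** * Cochains *)

Definition csgn (k : nat) (z : C) : C := if Nat.even k then z else Copp z.

Definition Csum (h : nat -> C) (ks : list nat) : C :=
  fold_right (fun k acc => Cadd (h k) acc) C0 ks.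

Lemma csgn_S (k : nat) (z : C) : csgn (S k) z = Copp (csgn k z).
Proof. unfold csgn; rewrite Nat.even_succ, <- Nat.negb_even; destruct (Nat.even k); simpl; ring. Qed.

Lemma csgn_sub (k : nat) (z w : C) : csgn k (Cadd z (Copp w)) = Cadd (csgn k z) (Copp (csgn k w)).
Proof. unfold csgn; destruct (Nat.even k); ring. Qed.

Lemma Csum_rcons (h : nat -> C) (ks : list nat) (k : nat) :
  Csum h (ks ++ [k]) = Cadd (Csum h ks) (h k).
Proof. induction ks as [|k' ks IH]; simpl; [|rewrite IH]; ring. Qed.

Lemma Csum_ext (h1 h2 : nat -> C) (ks : list nat) :
  (forall k, In k ks -> h1 k = h2 k) -> Csum h1 ks = Csum h2 ks.
Proof. induction ks; simpl; intros; auto; rewrite H, IHks; auto. Qed.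

Lemma coboundary_cons {A : BanachAlgebra} {X : BanachBimodule A} (n : nat) (T : Cochain X)
  (a : A) (l : list A) (x : X) :
  coboundary n T (a :: l) x =
  Cadd (T l (ract x a))
    (Cadd (Csum (fun k => csgn k (T (mergeAt (k - 1) (a :: l)) x)) (seq 1 n))
          (csgn (S n) (T (removelast (a :: l)) (lact (last (a :: l) a) x)))).
Proof.
  assert (Hsgn : forall k (f : Fn X) y, sgn k f y = csgn k (f y))
    by (intros; unfold sgn, csgn; destruct (Nat.even k); reflexivity).
  assert (Hfold : forall (g : nat -> Fn X) ks,
    fold_right (fun k acc => Fadd (g k) acc) Fzero ks x = Csum (fun k => g k x) ks)
    by (induction ks; simpl; auto; unfold Fadd at 1; rewrite IHks; reflexivity).
  unfold coboundary, Fadd at 1 2; rewrite Hfold, Hsgn; unfold dlact, dract.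
  do 2 f_equal; apply Csum_ext; intros; apply Hsgn.
Qed.

Lemma length_removelast {T : Type} (l : list T) : length (removelast l) = pred (length l).
Proof. induction l as [|a [|b l] IH]; simpl in *; auto. Qed.

Lemma length_S_rcons {T : Type} (l : list T) (n : nat) :
  length l = S n -> exists l' b, l = l' ++ [b] /\ length l' = n.
Proof.
  intros Hl; destruct l as [|a l0] eqn:E; [discriminate|rewrite <- E in *].
  exists (removelast l), (last l a); split.
  - apply app_removelast_last; subst; discriminate.
  - rewrite length_removelast, Hl; reflexivity.
Qed.

Lemma mergeAt_app {A : BanachAlgebra} (j : nat) (l t : list A) :
  (S j < length l)%nat -> mergeAt j (l ++ t) = mergeAt j l ++ t.
Proof.
  revert l; induction j; intros l Hl.
  - destruct l as [|a [|b l]]; simpl in *; try lia; reflexivity.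
  - destruct l as [|a l]; simpl in *; try lia; rewrite IHj by lia; reflexivity.
Qed.

Lemma length_mergeAt {A : BanachAlgebra} (j : nat) (l : list A) :
  (S j < length l)%nat -> length (mergeAt j l) = pred (length l).
Proof.
  revert l; induction j; intros l Hl.
  - destruct l as [|a [|b l]]; simpl in *; lia.
  - destruct l as [|a l]; simpl in *; try lia; rewrite IHj by lia; destruct l; simpl in *; lia.
Qed.

Lemma mergeAt_app_last {A : BanachAlgebra} (j : nat) (l : list A) (b d : A) :
  length l = S j -> mergeAt j (l ++ [b]) = removelast l ++ [amul (last l d) b].
Proof.
  revert l; induction j; intros l Hl.
  - destruct l as [|a [|c l]]; simpl in *; try lia; reflexivity.
  - destruct l as [|a [|c l]]; simpl in *; try lia.
    pose proof (IHj (c :: l) ltac:(simpl; lia)) as E; simpl in E; rewrite E; reflexivity.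
Qed.

Lemma set_nth_app {T : Type} (i : nat) (l t : list T) (v : T) :
  (i < length l)%nat -> set_nth i (l ++ t) v = set_nth i l v ++ t.
Proof.
  intros Hi; unfold set_nth; rewrite firstn_app, skipn_app.
  replace (i - length l)%nat with 0%nat by lia; replace (S i - length l)%nat with 0%nat by lia.
  simpl; rewrite app_nil_r, <- app_assoc; reflexivity.
Qed.

Lemma set_nth_app_last {T : Type} (l : list T) (u v : T) :
  set_nth (length l) (l ++ [u]) v = l ++ [v].
Proof.
  unfold set_nth; rewrite firstn_app, skipn_app, Nat.sub_diag, firstn_all, (skipn_all2 l) by lia.
  replace (S (length l) - length l)%nat with 1%nat by lia; simpl; rewrite !app_nil_r; reflexivity.
Qed.

Lemma length_set_nth {T : Type} (i : nat) (l : list T) (v : T) :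
  (i < length l)%nat -> length (set_nth i l v) = length l.
Proof.
  intros Hi; unfold set_nth; rewrite length_app, length_firstn; cbn [length].
  rewrite length_skipn; lia.
Qed.

Lemma prod_norms_app {A : BanachAlgebra} (l : list A) (b : A) :
  prod_norms (l ++ [b]) = prod_norms l * vnorm b.
Proof. induction l; simpl; [|rewrite IHl]; ring. Qed.

Lemma prod_norms_ge0 {A : BanachAlgebra} (l : list A) : 0 <= prod_norms l.
Proof. induction l; simpl; [lra|apply Rmult_le_pos; auto; apply vnorm_ge0]. Qed.

(** * Dimension shifting *)

(* An (m+1)-cochain F into X^* and an m-cochain G into (Bidual_mod A X)^* related by
   F(l, b)(x) = G(l)(ev b x) have related coboundaries: the last-slot terms of the coboundary
   of G, evaluated at ev b x, are exactly the two extra terms produced by [ev_lact]. *)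
Lemma coboundary_shift {A : BanachAlgebra} {X : BanachBimodule A} (m : nat)
  (F : Cochain X) (G : Cochain (Bidual_mod A X)) :
  (forall l b x, length l = m -> F (l ++ [b]) x = G l (ev b x)) ->
  (forall l, length l = m -> forall v w, G l (bd_add v w) = Cadd (G l v) (G l w)) ->
  forall l b x, length l = S m -> coboundary (S m) F (l ++ [b]) x = coboundary m G l (ev b x).
Proof.
  intros HFG HG l b x Hl.
  destruct l as [|a r]; [discriminate|]; injection Hl as Hr.
  change ((a :: r) ++ [b]) with (a :: (r ++ [b])); rewrite !coboundary_cons.
  change (a :: r ++ [b]) with ((a :: r) ++ [b]).
  rewrite HFG by exact Hr; change (@ract _ (Bidual_mod A X) (ev b x) a) with (bd_ract (ev b x) a); rewrite ev_ract.
  rewrite removelast_last, last_last, seq_S, Csum_rcons.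
  set (l := a :: r) in *.
  assert (Hlen : length l = S m) by (unfold l; simpl; auto).
  assert (Hrl : length (removelast l) = m) by (rewrite length_removelast, Hlen; reflexivity).
  assert (Hinner : Csum (fun k => csgn k (F (mergeAt (k - 1) (l ++ [b])) x)) (seq 1 m) =
                   Csum (fun k => csgn k (G (mergeAt (k - 1) l) (ev b x))) (seq 1 m)).
  { apply Csum_ext; intros k Hk; apply in_seq in Hk.
    rewrite mergeAt_app, HFG by (rewrite ?length_mergeAt; lia); reflexivity. }
  assert (Hlast : F l (lact b x) = G (removelast l) (ev (last l a) (lact b x))).
  { rewrite <- HFG by exact Hrl; rewrite <- app_removelast_last by discriminate; reflexivity. }
  rewrite Hinner, Hlast.
  replace (1 + m - 1)%nat with m by lia; replace (1 + m)%nat with (S m) by lia.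
  rewrite (mergeAt_app_last m l b a Hlen), HFG by exact Hrl.
  change (@lact _ (Bidual_mod A X) (last l a) (ev b x)) with (bd_lact (last l a) (ev b x)).
  rewrite ev_lact, HG by exact Hrl.
  change (bd_opp ?w) with (@vopp (Bidual_space A X) w).
  rewrite (additive_opp (Bidual_space A X) (G (removelast l)) (HG _ Hrl)).
  rewrite !csgn_S, csgn_sub; ring.
Qed.

Section CoboundaryEvaluation.
Variable A : BanachAlgebra.
Variable X : BanachBimodule A.

Definition bf_sgn (k : nat) (F : BForm A X) : BForm A X :=
  if Nat.even k then F else bf_scal A X (Copp C1) F.

Definition bf_sum (h : nat -> BForm A X) (ks : list nat) : BForm A X :=
  fold_right (fun k acc => bf_add A X (h k) acc) (bf_zero A X) ks.

Definition bf_coboundary (n : nat) (Q : list A -> BForm A X) (a : A) (l : list A) : BForm A X :=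
  bf_add A X (bf_lact A X a (Q l))
    (bf_add A X (bf_sum (fun k => bf_sgn k (Q (mergeAt (k - 1) (a :: l)))) (seq 1 n))
       (bf_sgn (S n) (bf_ract A X (Q (removelast (a :: l))) (last (a :: l) a)))).

Lemma bd_sgn_apply (w : Bidual A X) (k : nat) (F : BForm A X) :
  proj1_sig w (bf_sgn k F) = csgn k (proj1_sig w F).
Proof.
  unfold bf_sgn, csgn; destruct (Nat.even k); auto.
  rewrite bd_scal_apply; ring.
Qed.

Lemma bd_sum_apply (w : Bidual A X) (h : nat -> BForm A X) (ks : list nat) :
  proj1_sig w (bf_sum h ks) = Csum (fun k => proj1_sig w (h k)) ks.
Proof.
  induction ks as [|k ks IH]; simpl; [apply bd_zero_apply|].
  rewrite bd_add_apply, IH; reflexivity.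
Qed.

Lemma coboundary_apply (n : nat) (Q : list A -> BForm A X) (a : A) (l : list A)
  (w : Bidual_mod A X) :
  coboundary n (fun l (w : Bidual_mod A X) => proj1_sig w (Q l)) (a :: l) w
  = proj1_sig w (bf_coboundary n Q a l).
Proof.
  rewrite coboundary_cons; unfold bf_coboundary.
  rewrite !bd_add_apply, bd_sum_apply, bd_sgn_apply.
  do 2 f_equal; apply Csum_ext; intros; rewrite bd_sgn_apply; reflexivity.
Qed.

End CoboundaryEvaluation.

Lemma Cnorm_le_Rabs_scale (z : C) (K N N' : R) :
  Cnorm z <= K * N -> 0 <= N -> N <= N' -> Cnorm z <= Rabs K * N'.
Proof.
  intros Hz HN HN'; pose proof (Rle_abs K); pose proof (Rabs_pos K).
  assert (K * N <= Rabs K * N) by (apply Rmult_le_compat_r; auto).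
  assert (Rabs K * N <= Rabs K * N') by (apply Rmult_le_compat_l; auto).
  lra.
Qed.

Section Flat.
Variable A : BanachAlgebra.
Variable X : BanachBimodule A.
Variable n : nat.
Variable T : Cochain X.
Hypothesis T_BL : is_BL (S n) T.

Lemma BL_last_linear (l : list A) (a b : A) (c : C) (x : X) : length l = n ->
  T (l ++ [vadd a (vscal c b)]) x = Cadd (T (l ++ [a]) x) (Cmul c (T (l ++ [b]) x)).
Proof.
  intros Hl; destruct T_BL as (_ & Hlin & _).
  pose proof (Hlin (l ++ [a]) (length l) a b c x) as E; rewrite !set_nth_app_last in E.
  apply E; [rewrite length_app; simpl|]; lia.
Qed.

Lemma BL_last_zero (l : list A) (x : X) : length l = n -> T (l ++ [vzero]) x = C0.
Proof.
  intros Hl; pose proof (BL_last_linear l vzero vzero C1 x Hl) as E.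
  rewrite vscal_1, vadd_0 in E.
  replace (T (l ++ [vzero]) x) with
    (Cadd (Cadd (T (l ++ [vzero]) x) (Cmul C1 (T (l ++ [vzero]) x))) (Copp (T (l ++ [vzero]) x)))
    by ring.
  rewrite <- E; ring.
Qed.

Lemma slice_le_exists : exists K, 0 <= K /\ forall l, length l = n ->
  bform_le A X (fun b x => T (l ++ [b]) x) (K * prod_norms l).
Proof.
  destruct T_BL as (_ & _ & K & HK); exists (Rabs K); split; [apply Rabs_pos|].
  intros l Hl b x.
  specialize (HK (l ++ [b]) ltac:(rewrite length_app; simpl; lia) x).
  rewrite prod_norms_app in HK.
  pose proof (prod_norms_ge0 l); pose proof (vnorm_ge0 _ b); pose proof (vnorm_ge0 _ x).
  replace (Rabs K * prod_norms l * vnorm b * vnorm x)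
    with (Rabs K * (prod_norms l * vnorm b * vnorm x)) by ring.
  apply (Cnorm_le_Rabs_scale _ K (prod_norms l * vnorm b * vnorm x)); [|repeat apply Rmult_le_pos; auto|lra].
  rewrite <- !Rmult_assoc in *; exact HK.
Qed.

Lemma is_bform_slice (l : list A) : length l = n -> is_bform A X (fun b x => T (l ++ [b]) x).
Proof.
  intros Hl; destruct T_BL as (Hbl & _ & _).
  assert (Hlen : forall b, length (l ++ [b]) = S n) by (intros; rewrite length_app; simpl; lia).
  split; [|split; [|split; [|split]]].
  - intros b x y; apply (Hbl _ (Hlen b)).
  - intros b c x; apply (Hbl _ (Hlen b)).
  - intros b1 b2 x; pose proof (BL_last_linear l b1 b2 C1 x Hl) as E.
    rewrite vscal_1 in E; rewrite E; ring.
  - intros c b x; pose proof (BL_last_linear l vzero b c x Hl) as E.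
    rewrite vadd_0 in E; rewrite E, BL_last_zero by exact Hl; ring.
  - destruct slice_le_exists as (K & HK & HB); exists (K * prod_norms l); split; auto.
    apply Rmult_le_pos; auto; apply prod_norms_ge0.
Qed.

(* The value off length n is junk: cochains are only ever evaluated on lists of length n. *)
Definition slice (l : list A) : BForm A X :=
  match Nat.eq_dec (length l) n with
  | left Hl => exist _ _ (is_bform_slice l Hl)
  | right _ => bf_zero A X
  end.

Lemma slice_val (l : list A) : length l = n -> proj1_sig (slice l) = fun b x => T (l ++ [b]) x.
Proof. intros Hl; unfold slice; destruct Nat.eq_dec; [reflexivity|contradiction]. Qed.

Definition flat : Cochain (Bidual_mod A X) := fun l (w : Bidual_mod A X) => proj1_sig w (slice l).

Lemma flat_ev (l : list A) (b : A) (x : X) : length l = n -> flat l (ev b x) = T (l ++ [b]) x.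
Proof. intros Hl; unfold flat; simpl; rewrite slice_val by exact Hl; reflexivity. Qed.

Lemma flat_BL : is_BL n flat.
Proof.
  destruct slice_le_exists as (K & HK & HB).
  split; [|split].
  - intros l Hl; split; [|split]; [reflexivity|reflexivity|].
    destruct (bf_le_exists A X (slice l)) as (K' & HK' & HB'); exists K'; intros w.
    rewrite Rmult_comm; apply bd_norm_bound; auto.
  - intros l i a b c w Hl Hi; unfold flat.
    replace (slice (set_nth i l (vadd a (vscal c b))))
      with (bf_add A X (slice (set_nth i l a)) (bf_scal A X c (slice (set_nth i l b)))).
    + rewrite bd_add_apply, bd_scal_apply; reflexivity.
    + apply bf_ext; intros b' x; simpl; unfold bform_add, bform_scal.
      rewrite !slice_val by (rewrite length_set_nth; lia).
      rewrite <- !set_nth_app by lia; symmetry.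
      destruct T_BL as (_ & Hlin & _); apply Hlin; [rewrite length_app; simpl|]; lia.
  - exists K; intros l Hl w; unfold flat; rewrite Rmult_comm.
    apply bd_norm_bound; [apply Rmult_le_pos; auto; apply prod_norms_ge0|].
    rewrite slice_val by exact Hl; auto.
Qed.

Hypothesis T_closed : forall l, length l = S (S n) -> forall x, coboundary (S n) T l x = C0.

Lemma flat_cocycle : is_cocycle n flat.
Proof.
  split; [exact flat_BL|]; intros l Hl w.
  destruct l as [|a r]; [discriminate|]; unfold flat; rewrite coboundary_apply.
  replace (bf_coboundary A X n slice a r) with (bf_zero A X); [apply bd_zero_apply|].
  apply bf_ext; intros b x.
  change (C0 = proj1_sig (ev b x) (bf_coboundary A X n slice a r)).
  rewrite <- coboundary_apply; fold flat.
  rewrite <- (coboundary_shift n T flat); [| |reflexivity|exact Hl].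
  - symmetry; apply T_closed; rewrite length_app; simpl in *; lia.
  - intros; symmetry; apply flat_ev; auto.
Qed.

End Flat.

Section Sharp.
Variable A : BanachAlgebra.
Variable X : BanachBimodule A.
Variable m : nat.
Variable G : Cochain (Bidual_mod A X).
Hypothesis G_BL : is_BL m G.

Definition sharp : Cochain X := fun l x => G (removelast l) (ev (last l vzero) x).

Lemma sharp_rcons (l : list A) (b : A) (x : X) : sharp (l ++ [b]) x = G l (ev b x).
Proof. unfold sharp; rewrite removelast_last, last_last; reflexivity. Qed.

Lemma sharp_functional (l : list A) (b : A) :
  length l = m -> is_bounded_linear_functional (fun x => sharp (l ++ [b]) x).
Proof.
  intros Hl; destruct G_BL as (HG & _); destruct (HG l Hl) as (Gadd & Gscal & K & HK).
  split; [|split].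
  - intros x y; rewrite !sharp_rcons, ev_addr; apply Gadd.
  - intros c x; rewrite !sharp_rcons, ev_scalr; apply Gscal.
  - exists (Rabs K * vnorm b); intros x; rewrite sharp_rcons, Rmult_assoc.
    apply (Cnorm_le_Rabs_scale _ K (bd_norm (ev b x))); [apply HK|apply bd_norm_ge0|apply bd_norm_ev].
Qed.

Lemma sharp_BL : is_BL (S m) sharp.
Proof.
  destruct G_BL as (HG & Hlin & K & HK).
  split; [|split].
  - intros l Hl; destruct (length_S_rcons l m Hl) as (l' & b & -> & Hl').
    apply sharp_functional, Hl'.
  - intros l i a b c x Hl Hi; destruct (length_S_rcons l m Hl) as (l' & b' & -> & Hl').
    destruct (Nat.eq_dec i m) as [-> | Him].
    + rewrite <- Hl', !set_nth_app_last, !sharp_rcons, ev_linl.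
      destruct (HG l' Hl') as (Gadd & Gscal & _).
      change (bd_add ?v ?w) with (@vadd (Bidual_space A X) v w).
      change (bd_scal ?c ?w) with (@vscal (Bidual_space A X) c w).
      rewrite Gadd, Gscal; reflexivity.
    + rewrite !set_nth_app, !sharp_rcons by lia; apply Hlin; auto; lia.
  - exists (Rabs K); intros l Hl x; destruct (length_S_rcons l m Hl) as (l' & b & -> & Hl').
    rewrite sharp_rcons, prod_norms_app.
    pose proof (vnorm_ge0 _ b); pose proof (vnorm_ge0 _ x); pose proof (prod_norms_ge0 l').
    replace (Rabs K * (prod_norms l' * vnorm b) * vnorm x)
      with (Rabs K * (prod_norms l' * (vnorm b * vnorm x))) by ring.
    apply (Cnorm_le_Rabs_scale _ K (prod_norms l' * bd_norm (ev b x))).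
    + rewrite <- Rmult_assoc; apply HK, Hl'.
    + apply Rmult_le_pos; auto; apply bd_norm_ge0.
    + apply Rmult_le_compat_l; auto; apply bd_norm_ev.
Qed.

Lemma coboundary_sharp (l : list A) (b : A) (x : X) : length l = S m ->
  coboundary (S m) sharp (l ++ [b]) x = coboundary m G l (ev b x).
Proof.
  apply coboundary_shift; [intros; apply sharp_rcons|].
  intros l' Hl' v w; destruct G_BL as (HG & _); apply (HG l' Hl').
Qed.

End Sharp.

(** * Approximate triviality of cohomology *)

Lemma coboundary0_single {A : BanachAlgebra} {X : BanachBimodule A} (G : Cochain X) (a : A) (x : X) :
  coboundary 0 G [a] x = Fsub (dlact a (G [])) (dract (G []) a) x.
Proof. rewrite coboundary_cons; simpl; unfold Fsub, Fadd, Fopp, dlact, dract, csgn; simpl; ring. Qed.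

Lemma opnorm_le_ev {A : BanachAlgebra} {X : BanachBimodule A} (f : Fn X)
  (g : Fn (Bidual_mod A X)) (b : A) (e : R) :
  0 <= e -> (forall x, f x = g (ev b x)) -> opnorm_le g e -> opnorm_le f (e * vnorm b).
Proof.
  intros He Hfg Hg x; rewrite Hfg; eapply Rle_trans; [apply Hg|].
  rewrite Rmult_assoc; apply Rmult_le_compat_l; auto; apply bd_norm_ev.
Qed.

Lemma Happ_trivial_of_approx_amenable (A : BanachAlgebra) (X : BanachBimodule A) :
  approx_amenable A -> Happ_trivial A X 1.
Proof.
  intros HA T HT; destruct (HA X T HT) as (I & f & Hf & Hcv).
  exists I, (fun i => coboundary 0 (fun _ => f i)); split.
  - intros i; exists (fun _ => f i); split; [|reflexivity].
    split; [|split]; [intros; apply Hf|intros; simpl in *; lia|].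
    destruct (Hf i) as (_ & _ & K & HK); exists K; intros l Hl x.
    destruct l; [|discriminate]; simpl; rewrite Rmult_1_r; apply HK.
  - intros l Hl eps He; destruct l as [|a [|]]; try discriminate.
    destruct (Hcv a eps He) as [i0 Hi0]; exists i0; intros i Hi x.
    unfold Fsub, Fadd, Fopp; rewrite coboundary0_single; apply Hi0, Hi.
Qed.

Lemma approx_amenable_of_Happ_trivial (A : BanachAlgebra) :
  (forall X, Happ_trivial A X 1) -> approx_amenable A.
Proof.
  intros H X T HT; destruct (H X T HT) as (I & U & HU & Hcv).
  destruct (choice _ HU) as [G HG]; simpl in HG.
  exists I, (fun i => G i []); split.
  - intros i; apply (proj1 (proj1 (HG i))); reflexivity.
  - intros a eps He; destruct (Hcv [a] eq_refl eps He) as [i0 Hi0]; exists i0; intros i Hi x.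
    specialize (Hi0 i Hi x); unfold Fsub, Fadd, Fopp in *.
    rewrite (proj2 (HG i) [a] eq_refl x) in Hi0; simpl Nat.sub in Hi0.
    rewrite coboundary0_single in Hi0; exact Hi0.
Qed.

(* Approximating the flattened cocycle by coboundaries [delta G_i] in the shifted module,
   the cochains [sharp G_i] approximate T: evaluation at [ev b x] costs at most |b| |x|. *)
Lemma Happ_trivial_shift (A : BanachAlgebra) (m : nat) :
  (forall W : BanachBimodule A, Happ_trivial A W (S m)) ->
  forall X : BanachBimodule A, Happ_trivial A X (S (S m)).
Proof.
  intros IH X T [HT Hcl].
  destruct (IH _ _ (flat_cocycle A X (S m) T HT Hcl)) as (I & U & HU & Hcv).
  destruct (choice _ HU) as [G HG]; replace (S m - 1)%nat with m in HG by lia.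
  exists I, (fun i => coboundary (S m) (sharp A X (G i))); split.
  - intros i; exists (sharp A X (G i)); split; [apply sharp_BL, HG|reflexivity].
  - intros l Hl eps He; destruct (length_S_rcons l (S m) Hl) as (l' & b & -> & Hl').
    pose proof (vnorm_ge0 _ b).
    set (e := eps / (vnorm b + 1)).
    assert (He' : 0 < e) by (apply Rdiv_lt_0_compat; lra).
    assert (Heb : e * vnorm b <= eps).
    { unfold e; apply Rmult_le_reg_r with (vnorm b + 1); [lra|].
      replace (eps / (vnorm b + 1) * vnorm b * (vnorm b + 1)) with (eps * vnorm b) by (field; lra).
      nra. }
    destruct (Hcv l' Hl' e He') as [i0 Hi0]; exists i0; intros i Hi x.
    destruct (HG i) as [HGi HUi].
    eapply Rle_trans; [apply (opnorm_le_ev _ (Fsub (U i l') (flat A X (S m) T HT l')) b e);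
                        [lra| |apply (Hi0 i Hi)]|].
    + intros y; unfold Fsub, Fadd, Fopp.
      rewrite coboundary_sharp, HUi, flat_ev by auto; reflexivity.
    + apply Rmult_le_compat_r; [apply vnorm_ge0|exact Heb].
Qed.

Theorem theorem3p9 (A : BanachAlgebra) :
  approx_amenable A <->
  (forall (X : BanachBimodule A) (n : nat), (1 <= n)%nat -> Happ_trivial A X n).
Proof.
  split.
  - intros HA.
    assert (Hall : forall n X, Happ_trivial A X (S n)).
    { induction n as [|n IH]; intros X.
      - apply Happ_trivial_of_approx_amenable, HA.
      - apply Happ_trivial_shift, IH. }
    intros X [|n] Hn; [lia|apply Hall].
  - intros H; apply approx_amenable_of_Happ_trivial; intros X; apply H; lia.
Qed.
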